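(* Let $R\in[0,\tfrac34]$. Suppose the algorithm described in the context is run with penalty functions $f_j:[0,1]\to[0,1]$ ($j\in S$, possibly chosen depending on the advice $A$) that are continuous, nondecreasing, and satisfy $$1-\frac{1-R}{x}\;\le\; f_j(x)\;\le\;\frac{1-R}{1-x}\qquad\text{for all }x\in(0,1)$$ (and $f_j(1)\ge R$). Then for every instance $G$ and every advice $A$, $\mathsf{ALG}(G,A)\ge R\cdot \mathsf{OPT}(G)$; i.e. the algorithm is $R$-robust.
   Context: Setting (two-stage vertex-weighted bipartite matching with advice). A bipartite graph $G=(D,S,E)$ has offline vertices $S$, each $j\in S$ carrying a weight $w_j\ge 0$, and online vertices $D=D_1\sqcup D_2$ arriving in two stages. $E_1$ (resp. $E_2$) denotes the set of edges between $D_1$ (resp. $D_2$) and $S$. The advice is a matching $A\subseteq E_1$. $\mathsf{OPT}(G)$ denotes the maximum of $\sum_{j\in S\text{ covered by }M}w_j$ over all matchings $M\subseteq E$. Algorithm (parameters: functions $f_j:[0,1]\to[0,1]$, $j\in S$). First stage: after $D_1,E_1,A$ are revealed, let $\bar x$ be an optimal solution of (P1): maximize $\sum_{j\in S} w_j\bigl(x_j-\int_0^{x_j}f_j(t)\,dt\bigr)$ subject to $x_i:=\sum_{j:(i,j)\in E_1}x_{ij}\le 1$ ($i\in D_1$), $x_j:=\sum_{i:(i,j)\in E_1}x_{ij}\le 1$ ($j\in S$), $x_{ij}\ge0$. Second stage: after $D_2,E_2$ are revealed, let $\bar y$ be an optimal solution of (P2): maximize $\sum_{j\in S}w_jy_j$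 subject to $y_i:=\sum_{j:(i,j)\in E_2}y_{ij}\le 1$ ($i\in D_2$), $y_j:=\sum_{i:(i,j)\in E_2}y_{ij}\le 1-\bar x_j$ ($j\in S$), $y_{ij}\ge 0$. The algorithm's value is $\mathsf{ALG}(G,A)=\sum_{j\in S}w_j(\bar x_j+\bar y_j)$. *)

From HB Require Import structures.
From mathcomp Require Import all_boot all_order all_algebra.
From mathcomp Require Import all_classical all_reals all_analysis.
Set Implicit Arguments. Unset Strict Implicit. Unset Printing Implicit Defensive.
Import Order.TTheory GRing.Theory Num.Theory.
Import numFieldNormedType.Exports.
Local Open Scope classical_set_scope.
Local Open Scope ring_scope.

Section TwoStage.
Variables (R : realType) (D1 D2 S : finType).

Definition union_edges (E1 : D1 -> S -> bool) (E2 : D2 -> S -> bool)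
  : (D1 + D2)%type -> S -> bool :=
  fun d j => match d with inl i => E1 i j | inr i => E2 i j end.

Definition is_matching (T : finType) (E : T -> S -> bool) (M : {set T * S}) :=
  [/\ forall e, e \in M -> E e.1 e.2,
      forall i : T, #|[set j : S | (i, j) \in M]| <= 1 &
      forall j : S, #|[set i : T | (i, j) \in M]| <= 1]%N.

Definition covered (T : finType) (M : {set T * S}) (j : S) : bool :=
  [exists i : T, (i, j) \in M].

Definition matching_weight (T : finType) (w : S -> R) (M : {set T * S}) : R :=
  \sum_(j | covered M j) w j.

(** OPT(G): maximum weight of a matching of G (the empty matching has weight
    0 and weights are nonnegative, so 0 is a neutral start for the max). *)
Definition OPT (E1 : D1 -> S -> bool) (E2 : D2 -> S -> bool) (w : S -> R) : R :=
  \big[Num.max/0]_(M : {set (D1 + D2) * S} | `[< is_matching (union_edges E1 E2) M >])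
     matching_weight w M.

Definition load1 (E1 : D1 -> S -> bool) (x : D1 -> S -> R) (j : S) : R :=
  \sum_(i | E1 i j) x i j.

Definition P1_feasible (E1 : D1 -> S -> bool) (x : D1 -> S -> R) : Prop :=
  [/\ forall i j, E1 i j -> 0 <= x i j,
      forall i : D1, \sum_(j | E1 i j) x i j <= 1 &
      forall j : S, load1 E1 x j <= 1].

Definition P1_obj (E1 : D1 -> S -> bool) (w : S -> R) (f : S -> R -> R)
  (x : D1 -> S -> R) : R :=
  \sum_j w j * (load1 E1 x j -
     (\int[@lebesgue_measure R]_(t in `[0, load1 E1 x j]) f j t)).

Definition P1_optimal E1 w f (x : D1 -> S -> R) : Prop :=
  P1_feasible E1 x /\
  forall x', P1_feasible E1 x' -> P1_obj E1 w f x' <= P1_obj E1 w f x.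

Definition load2 (E2 : D2 -> S -> bool) (y : D2 -> S -> R) (j : S) : R :=
  \sum_(i | E2 i j) y i j.

Definition P2_feasible (E2 : D2 -> S -> bool) (xb : S -> R) (y : D2 -> S -> R)
  : Prop :=
  [/\ forall i j, E2 i j -> 0 <= y i j,
      forall i : D2, \sum_(j | E2 i j) y i j <= 1 &
      forall j : S, load2 E2 y j <= 1 - xb j].

Definition P2_obj (E2 : D2 -> S -> bool) (w : S -> R) (y : D2 -> S -> R) : R :=
  \sum_j w j * load2 E2 y j.

Definition P2_optimal E2 w (xb : S -> R) (y : D2 -> S -> R) : Prop :=
  P2_feasible E2 xb y /\
  forall y', P2_feasible E2 xb y' -> P2_obj E2 w y' <= P2_obj E2 w y.

Definition ALG E1 E2 (w : S -> R) (x : D1 -> S -> R) (y : D2 -> S -> R) : R :=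
  \sum_j w j * (load1 E1 x j + load2 E2 y j).

Definition admissible_penalty (rho : R) (g : R -> R) : Prop :=
  [/\ forall t, t \in `[0, 1] -> 0 <= g t <= 1,
      {within `[0, 1]%classic, continuous g},
      {in `[0, 1] &, {homo g : s t / s <= t}},
      (forall t, 0 < t < 1 -> 1 - (1 - rho) / t <= g t /\ g t <= (1 - rho) / (1 - t))
    & rho <= g 1].

End TwoStage.

From HB Require Import structures.
From mathcomp Require Import all_boot all_order all_algebra.
From mathcomp Require Import all_classical all_reals all_analysis.
From mathcomp Require Import lra ring.
Import Order.TTheory GRing.Theory Num.Theory.
Import numFieldNormedType.Exports.
Local Open Scope classical_set_scope.
Local Open Scope ring_scope.

(* The objective of (P1) is a sum of concave functions [w_j (x - int_0^x f_j)],
   so optimality of [xbar] gives [sum_j w_j (x'_j - xbar_j) (1 - f_j xbar_j) <= 0]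
   for every feasible [x'].  Testing this, and the optimality of [ybar] in (P2),
   against the solutions induced by a matching [M] of [G] -- its [D1]-edges in
   stage one, its [D2]-edges scaled by the residual capacities [1 - xbar_j] in
   stage two -- bounds ALG below by [sum_j w_j (xbar_j f_j + x'_j (1 - f_j) + y'_j)],
   and the two-sided bound on [f_j] makes the summand of every vertex covered by
   [M] at least [rho w_j]. *)

Section MonotonePenalty.
Context {R : realType} (g : R -> R).
Hypotheses (g_cont : {within `[0, 1], continuous g})
           (g_mono : {in `[0, 1] &, {homo g : s t / s <= t}}).
Local Notation mu := (@lebesgue_measure R).

Lemma Rintegral_increment_bounds {a b : R} : 0 <= a -> a <= b -> b <= 1 ->
  g a * (b - a) <= \int[mu]_(t in `[0, b]) g t - \int[mu]_(t in `[0, a]) g t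
                <= g b * (b - a).
Proof.
move=> a0 ab b1.
have g_int01 : mu.-integrable `[0, 1] (EFin \o g).
  by apply: continuous_compact_integrable => //; exact: segment_compact.
have g_int0b : mu.-integrable `[0, b] (EFin \o g).
  by apply: integrableS g_int01 => //; apply: subset_itvl; rewrite bnd_simp.
have g_intab : mu.-integrable `]a, b] (EFin \o g).
  by apply: integrableS g_int01 => //; apply: subset_itvScc; rewrite bnd_simp ?(le_trans ab).
have cst_int k : mu.-integrable `]a, b] (EFin \o (fun=> k)).
  apply: (@integrableS _ _ _ mu `[a, b]) => //; first exact: subset_itv_oc_cc.
  apply: continuous_compact_integrable; first exact: segment_compact.
  by move=> x; exact: cvg_cst.
have len_ab : fine (mu `]a, b]) = b - a.
  rewrite lebesgue_measure_itv/= lte_fin.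
  case: ltP => [ab'|ba]; first by rewrite -EFinD.
  have -> : a = b by apply/eqP; rewrite eq_le ab ba.
  by rewrite subrr.
have g_mono_ab s t : a <= s <= b -> a <= t <= b -> s <= t -> g s <= g t.
  by move=> /andP[? ?] /andP[? ?]; apply: g_mono; rewrite in_itv/=; apply/andP; split; lra.
rewrite (@Rintegral_itvB _ g (BLeft 0) (BRight b) a g_int0b) ?bnd_simp //.
rewrite -len_ab -!Rintegral_cst //.
apply/andP; split; apply: le_Rintegral => // t /=; rewrite in_itv/= => /andP[ta tb];
  apply: g_mono_ab; lra.
Qed.

Definition gain (x : R) : R := x - \int[mu]_(t in `[0, x]) g t.

Lemma gain_sub_ge {a c : R} : 0 <= a <= 1 -> 0 <= c <= 1 ->
  (c - a) * (1 - g c) <= gain c - gain a.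
Proof.
rewrite /gain => /andP[a0 a1] /andP[c0 c1].
have [ac|ca] := leP a c.
  by have /andP[_] := Rintegral_increment_bounds a0 ac c1; lra.
by have /andP[+ _] := Rintegral_increment_bounds c0 (ltW ca) a1; lra.
Qed.

Lemma cvg_along_segment (a b : R) : a \in `[0, 1] -> b \in `[0, 1] ->
  g (a + t * (b - a)) @[t --> 0^'+] --> g a.
Proof.
move=> a01 b01.
have path_a : a + t * (b - a) @[t --> 0^'+] --> a.
  have : a + t * (b - a) @[t --> 0] --> a + 0 * (b - a).
    by apply: cvgD; [exact: cvg_cst | apply: cvgM; [exact: cvg_id | exact: cvg_cst]].
  by rewrite mul0r addr0; exact: cvg_at_right_filter.
have g_near := (subspace_continuousP _ _).1 g_cont a a01.
apply/cvgrPdist_lt => e e0.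
have g_near_e : \forall y \near within `[0, 1] (nbhs a), `|g a - g y| < e.
  by move: g_near => /cvgrPdist_lt /(_ e e0).
have near_a : \forall t \near 0^'+,
    `[0, 1]%classic (a + t * (b - a)) -> `|g a - g (a + t * (b - a))| < e.
  exact: path_a _ g_near_e.
near=> t; apply: (near near_a t) => //=.
have t0 : 0 < t by near: t; exact: nbhs_right_gt.
have t1 : t < 1 by near: t; exact: nbhs_right_lt.
move: a01 b01; rewrite !in_itv/= => /andP[? ?] /andP[? ?]; apply/andP; split; nra.
Unshelve. all: by end_near.
Qed.

End MonotonePenalty.

Section AdmissiblePenalty.
Context {R : realType} {rho : R} {g : R -> R}.
Hypothesis g_adm : admissible_penalty rho g.

Lemma admissible_penalty_bounded {x} : 0 <= x <= 1 -> 0 <= g x <= 1.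
Proof. by case: g_adm => g01 _ _ _ _ x01; apply: g01; rewrite in_itv. Qed.

Lemma admissible_rho_le1 : rho <= 1.
Proof.
case: g_adm => g01 _ _ _ /le_trans; apply.
by have /andP[] := g01 1 (ltac:(by rewrite in_itv/= ler01 lexx)).
Qed.

Lemma admissible_mulrBr_le x : 0 <= x <= 1 -> g x * (1 - x) <= 1 - rho.
Proof.
move=> /andP[x0 x1].
have [_ _ g_mono g_sandwich _] := g_adm.
have [->|x_neq1] := eqVneq x 1; first by rewrite subrr mulr0 subr_ge0 admissible_rho_le1.
have x_lt1 : x < 1 by rewrite lt_neqAle x_neq1.
have [->|x_neq0] := eqVneq x 0; last first.
  have [_] := g_sandwich x (ltac:(by rewrite lt_neqAle eq_sym x_neq0 x0 x_lt1)).
  by rewrite ler_pdivlMr ?subr_gt0.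
(* [g 0 (1 - t) <= g t (1 - t) <= 1 - rho] for [t] in (0, 1); let [t] go to 0 *)
have lim_g0 : g 0 * (1 - t) @[t --> 0^'+] --> g 0 * (1 - 0).
  apply: cvg_at_right_filter; apply: cvgM; first exact: cvg_cst.
  by apply: cvgB; [exact: cvg_cst | exact: cvg_id].
apply: (cvgr_to_le lim_g0); near=> t.
have t0 : 0 < t by near: t; exact: nbhs_right_gt.
have t1 : t < 1 by near: t; exact: nbhs_right_lt.
have [_] := g_sandwich t (ltac:(by rewrite t0 t1)).
rewrite ler_pdivlMr ?subr_gt0 //; apply: le_trans; apply: ler_wpM2r.
  by rewrite subr_ge0 ltW.
by apply: g_mono; rewrite ?in_itv/= ?lexx ?ler01 ?ltW.
Unshelve. all: by end_near.
Qed.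

Lemma admissible_mulBr_le x : 0 <= x <= 1 -> x * (1 - g x) <= 1 - rho.
Proof.
move=> /andP[x0 x1]; have [_ _ _ g_sandwich g1] := g_adm.
have [->|x_neq0] := eqVneq x 0; first by rewrite mul0r subr_ge0 admissible_rho_le1.
have [->|x_neq1] := eqVneq x 1; first by rewrite mul1r lerB.
have x01 : 0 < x < 1 by rewrite !lt_neqAle eq_sym x_neq0 x_neq1 x0 x1.
have [low _] := g_sandwich x x01.
by rewrite mulrC -ler_pdivlMr ?(andP x01).1 // lerBlDr addrC -lerBlDr.
Qed.

End AdmissiblePenalty.

Lemma robust_contribution {R : realFieldType} (rho x p x' y' : R) :
  p * (1 - x) <= 1 - rho -> x * (1 - p) <= 1 - rho -> 0 <= p <= 1 ->
  0 <= x' -> 0 <= y' -> 1 <= x' \/ 1 - x <= y' ->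
  rho <= x * p + x' * (1 - p) + y'.
Proof. by move=> ? ? /andP[? ?] ? ? [?|?]; nra. Qed.

Section FirstStage.
Context {R : realType} {D1 S : finType} {E1 : D1 -> S -> bool}.

Lemma load1_ge0_le1 {x : D1 -> S -> R} :
  P1_feasible E1 x -> forall j, 0 <= load1 E1 x j <= 1.
Proof.
by move=> [x_ge0 _ load_le1] j; rewrite load_le1 andbT; apply: sumr_ge0 => i; exact: x_ge0.
Qed.

Lemma sumr_segment (I : finType) (P : pred I) (a b : I -> R) (t : R) :
  \sum_(k | P k) (a k + t * (b k - a k)) =
  \sum_(k | P k) a k + t * (\sum_(k | P k) b k - \sum_(k | P k) a k).
Proof. by rewrite big_split /= -mulr_sumr sumrB. Qed.

Lemma load1_segment (x x' : D1 -> S -> R) (t : R) (j : S) :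
  load1 E1 (fun i j => x i j + t * (x' i j - x i j)) j =
  load1 E1 x j + t * (load1 E1 x' j - load1 E1 x j).
Proof. exact: sumr_segment. Qed.

Lemma P1_feasible_segment {x x' : D1 -> S -> R} (t : R) :
  P1_feasible E1 x -> P1_feasible E1 x' -> 0 <= t <= 1 ->
  P1_feasible E1 (fun i j => x i j + t * (x' i j - x i j)).
Proof.
move=> [x_ge0 x_row x_col] [x'_ge0 x'_row x'_col] /andP[t0 t1]; split.
- by move=> i j e; have := x_ge0 i j e; have := x'_ge0 i j e; nra.
- by move=> i; rewrite sumr_segment; have := x_row i; have := x'_row i; nra.
- by move=> j; rewrite load1_segment; have := x_col j; have := x'_col j; nra.
Qed.

Lemma P1_objE (w : S -> R) (f : S -> R -> R) (x : D1 -> S -> R) :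
  P1_obj E1 w f x = \sum_j w j * gain (f j) (load1 E1 x j).
Proof. by []. Qed.

(* The left-hand side is the right derivative at [t = 0] of the objective
   along [xbar + t (x' - xbar)], minorized through [gain_sub_ge]. *)
Lemma P1_optimal_variational {w : S -> R} {f : S -> R -> R} {rho : R}
    {xbar x' : D1 -> S -> R} :
  (forall j, 0 <= w j) -> (forall j, admissible_penalty rho (f j)) ->
  P1_optimal E1 w f xbar -> P1_feasible E1 x' ->
  \sum_j w j * (load1 E1 x' j - load1 E1 xbar j) * (1 - f j (load1 E1 xbar j)) <= 0.
Proof.
move=> w_ge0 f_adm [xbar_feas xbar_opt] x'_feas.
set X := load1 E1 xbar; set X' := load1 E1 x'.
have X01 := load1_ge0_le1 xbar_feas; have X'01 := load1_ge0_le1 x'_feas.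
have f_cont j : {within `[0, 1], continuous f j} by case: (f_adm j).
have f_mono j : {in `[0, 1] &, {homo f j : s t / s <= t}} by case: (f_adm j).
pose phi t := \sum_j w j * (X' j - X j) * (1 - f j (X j + t * (X' j - X j))).
have phi_cvg : phi t @[t --> 0^'+] --> phi 0.
  rewrite /phi; under [Z in _ --> Z]eq_bigr do rewrite mul0r addr0.
  apply: (cvg_big add_continuous) => j _; apply: cvgM; first exact: cvg_cst.
  apply: cvgB; first exact: cvg_cst.
  by apply: cvg_along_segment; rewrite ?in_itv/=.
rewrite -[Z in Z <= _](_ : phi 0 = _); last by apply: eq_bigr => j _; rewrite mul0r addr0.
apply: (cvgr_to_le phi_cvg); near=> t.
have t0 : 0 < t by near: t; exact: nbhs_right_gt.
have t1 : t < 1 by near: t; exact: nbhs_right_lt.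
have xt_feas := P1_feasible_segment t xbar_feas x'_feas (ltac:(by rewrite !ltW)).
have Xt01 := load1_ge0_le1 xt_feas.
have obj_decr := xbar_opt _ xt_feas; rewrite -subr_le0 !P1_objE -sumrB in obj_decr.
rewrite -(pmulr_rle0 _ t0); apply: le_trans obj_decr.
rewrite mulr_sumr; apply: ler_sum => j _.
rewrite -mulrBr mulrCA -!mulrA; apply: ler_wpM2l => //.
have := gain_sub_ge (f j) (f_cont j) (f_mono j) (X01 j) (Xt01 j).
by rewrite load1_segment -/X -/X' addrAC subrr add0r mulrCA mulrA.
Unshelve. all: by end_near.
Qed.

End FirstStage.

Lemma sum_indicator_le1 {R : numDomainType} (I : finType) (P c : pred I) :
  (#|[set k | c k]| <= 1)%N -> \sum_(k | P k) (c k)%:R <= 1 :> R.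
Proof.
move=> c_le1; apply: (@le_trans _ _ (\sum_k (c k)%:R)).
  by rewrite [leRHS](bigID P) /= lerDl; apply: sumr_ge0.
rewrite -natr_sum lern1 (leq_trans _ c_le1) //.
apply: eq_leq; rewrite -sum1_card [RHS]big_mkcond /=.
by apply: eq_bigr => k _; rewrite unfold_in /in_set /= asboolb; case: (c k).
Qed.

Definition matching_x1 {R : realType} {D1 D2 S : finType} (M : {set (D1 + D2) * S})
  : D1 -> S -> R := fun i j => ((inl i, j) \in M)%:R.

Definition matching_y2 {R : realType} {D1 D2 S : finType} (M : {set (D1 + D2) * S})
  (X : S -> R) : D2 -> S -> R := fun i j => ((inr i, j) \in M)%:R * (1 - X j).

Section MatchingSolution.
Context {R : realType} {D1 D2 S : finType}.
Context {E1 : D1 -> S -> bool} {E2 : D2 -> S -> bool} {M : {set (D1 + D2) * S}}.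
Hypothesis M_matching : is_matching (union_edges E1 E2) M.

Lemma matching_row_le1 d (P : pred S) : \sum_(j | P j) ((d, j) \in M)%:R <= 1 :> R.
Proof. by case: M_matching => _ M_row _; exact: sum_indicator_le1. Qed.

Lemma matching_col_le1 j (P : pred (D1 + D2)) :
  \sum_(d | P d) ((d, j) \in M)%:R <= 1 :> R.
Proof. by case: M_matching => _ _ M_col; exact: sum_indicator_le1. Qed.

Lemma matching_col1_le1 j (P : pred D1) :
  \sum_(i | P i) ((inl i, j) \in M)%:R <= 1 :> R.
Proof.
have := matching_col_le1 j [pred d | if d is inl i then P i else false].
by rewrite big_sumType /= big_pred0_eq addr0.
Qed.

Lemma matching_col2_le1 j (P : pred D2) :
  \sum_(i | P i) ((inr i, j) \in M)%:R <= 1 :> R.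
Proof.
have := matching_col_le1 j [pred d | if d is inr i then P i else false].
by rewrite big_sumType /= big_pred0_eq add0r.
Qed.

Lemma matching_x1_feasible : P1_feasible E1 (matching_x1 M : D1 -> S -> R).
Proof.
split=> [i j _|i|j]; [exact: ler0n | exact: matching_row_le1 | exact: matching_col1_le1].
Qed.

Lemma matching_y2_feasible {X : S -> R} : (forall j, 0 <= X j <= 1) ->
  P2_feasible E2 X (matching_y2 M X).
Proof.
move=> X01; split=> [i j _|i|j].
- by rewrite mulr_ge0 // subr_ge0; case/andP: (X01 j).
- apply: le_trans (matching_row_le1 (inr i) (E2 i)); apply: ler_sum => j _.
  by rewrite ler_piMr // lerBlDr lerDl; case/andP: (X01 j).
- rewrite /load2 -mulr_suml ler_piMl ?matching_col2_le1 // subr_ge0.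
  by case/andP: (X01 j).
Qed.

Lemma matching_cover (X : S -> R) j : (forall j, 0 <= X j <= 1) -> covered M j ->
  1 <= load1 E1 (matching_x1 M : D1 -> S -> R) j \/
  1 - X j <= load2 E2 (matching_y2 M X) j.
Proof.
case: M_matching => M_edges _ _ X01 /existsP[[i|i] /[dup] ij_in /M_edges Eij];
  [left|right].
- rewrite /load1 (bigD1 i) //= {1}/matching_x1 ij_in lerDl.
  by apply: sumr_ge0 => *; exact: ler0n.
- rewrite /load2 (bigD1 i) //= {1}/matching_y2 ij_in mul1r lerDl.
  have [y_ge0 _ _] := matching_y2_feasible X01.
  by apply: sumr_ge0 => k /andP[E2k _]; exact: y_ge0.
Qed.

End MatchingSolution.

Lemma robust_against_matching {R : realType} {D1 D2 S : finType}
  (E1 : D1 -> S -> bool) (E2 : D2 -> S -> bool) (w : S -> R)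
  (rho : R) (f : S -> R -> R) (xbar : D1 -> S -> R) (ybar : D2 -> S -> R)
  (M : {set (D1 + D2) * S}) :
  (forall j, 0 <= w j) -> (forall j, admissible_penalty rho (f j)) ->
  P1_optimal E1 w f xbar -> P2_optimal E2 w (load1 E1 xbar) ybar ->
  is_matching (union_edges E1 E2) M ->
  rho * matching_weight w M <= ALG E1 E2 w xbar ybar.
Proof.
move=> w_ge0 f_adm xbar_opt [_ ybar_opt] M_matching.
set X := load1 E1 xbar.
have X01 : forall j, 0 <= X j <= 1 := load1_ge0_le1 xbar_opt.1.
pose x' : D1 -> S -> R := matching_x1 M; pose y' := matching_y2 M X.
have x'_feas : P1_feasible E1 x' := matching_x1_feasible M_matching.
have y'_feas : P2_feasible E2 X y' := matching_y2_feasible M_matching X01.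
set X' := load1 E1 x'; set Y' := load2 E2 y'.
have first_order := P1_optimal_variational w_ge0 f_adm xbar_opt x'_feas.
rewrite -/X -/X' in first_order.
have second_stage := ybar_opt _ y'_feas; rewrite /P2_obj -/Y' in second_stage.
pose V j := X j * f j (X j) + X' j * (1 - f j (X j)) + Y' j.
have V_bounds j : 0 <= V j /\ (covered M j -> rho <= V j).
  have X'0 : 0 <= X' j by case/andP: (load1_ge0_le1 x'_feas j).
  have Y'0 : 0 <= Y' j.
    by case: y'_feas => y'_ge0 _ _; apply: sumr_ge0 => i; exact: y'_ge0.
  have f01 := admissible_penalty_bounded (f_adm j) (X01 j).
  split; first by case/andP: f01 => ? ?; case/andP: (X01 j) => ? ?; rewrite /V; nra.
  move=> cov; apply: robust_contribution => //.
  - exact: admissible_mulrBr_le.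
  - exact: admissible_mulBr_le.
  - exact: matching_cover.
rewrite /matching_weight mulr_sumr big_mkcond /ALG.
apply: (@le_trans _ _ (\sum_j w j * V j)).
  apply: ler_sum => j _; have [V_ge0 V_ge_rho] := V_bounds j.
  by case: ifP => [/V_ge_rho|_]; rewrite ?mulr_ge0 // mulrC => /ler_wpM2l; apply.
have -> : \sum_j w j * V j =
    \sum_j w j * X j + \sum_j w j * (X' j - X j) * (1 - f j (X j)) + \sum_j w j * Y' j.
  by rewrite -!big_split /=; apply: eq_bigr => j _; rewrite /V; ring.
under [Z in _ <= Z]eq_bigr do rewrite mulrDr.
rewrite big_split /=; lra.
Qed.

Lemma ALG_ge0 {R : realType} {D1 D2 S : finType}
  {E1 : D1 -> S -> bool} {E2 : D2 -> S -> bool} {w : S -> R}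
  {xbar : D1 -> S -> R} {ybar : D2 -> S -> R} {X : S -> R} :
  (forall j, 0 <= w j) -> P1_feasible E1 xbar -> P2_feasible E2 X ybar ->
  0 <= ALG E1 E2 w xbar ybar.
Proof.
move=> w_ge0 xbar_feas [ybar_ge0 _ _]; apply: sumr_ge0 => j _.
rewrite mulr_ge0 // addr_ge0 //; first by case/andP: (load1_ge0_le1 xbar_feas j).
by apply: sumr_ge0 => i; exact: ybar_ge0.
Qed.

Theorem theorem1 (R : realType) (D1 D2 S : finType)
  (E1 : D1 -> S -> bool) (E2 : D2 -> S -> bool) (w : S -> R)
  (A : {set D1 * S}) (rho : R) (f : S -> R -> R)
  (xbar : D1 -> S -> R) (ybar : D2 -> S -> R) :
  0 <= rho <= 3 / 4 ->
  (forall j, 0 <= w j) ->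
  is_matching E1 A ->
  (forall j, admissible_penalty rho (f j)) ->
  P1_optimal E1 w f xbar ->
  P2_optimal E2 w (load1 E1 xbar) ybar ->
  rho * OPT E1 E2 w <= ALG E1 E2 w xbar ybar.
Proof.
move=> /andP[rho_ge0 _] w_ge0 _ f_adm xbar_opt ybar_opt.
apply: (big_ind (fun v => rho * v <= ALG E1 E2 w xbar ybar)).
- by rewrite mulr0 (ALG_ge0 w_ge0 xbar_opt.1 ybar_opt.1).
- by move=> a b ? ?; rewrite maxr_pMr // ge_max; apply/andP.
- by move=> M /asboolP; exact: robust_against_matching.
Qed.
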